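(* There exists a connected graphon $W$ with $h_W=0$. Moreover $W$ can be chosen $\{0,1\}$-valued such that $W^{-1}(1)$ contains an open subset of $(0,1)^2$ containing the diagonal $\{(x,x):0<x<1\}$.
   Context: Let $I=[0,1]$ with Lebesgue measure $\mu_L$. A graphon is a measurable function $W:I^2\to I$ with $W(x,y)=W(y,x)$. For measurable $A,B\subseteq I$ put $e_W(A,B)=\int_{A\times B}W$ and $\mathrm{vol}_W(A)=e_W(A,I)$. $W$ is connected if $e_W(A,A^c)\neq0$ for every measurable $A$ with $0<\mu_L(A)<1$. The Cheeger constant is $h_W=\inf_{A:\,0<\mu_L(A)<1}\frac{e_W(A,A^c)}{\min\{\mathrm{vol}_W(A),\mathrm{vol}_W(A^c)\}}$. *)

From HB Require Import structures.
From mathcomp Require Import all_boot all_order all_algebra.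
From mathcomp Require Import all_classical all_reals all_analysis.
Set Implicit Arguments. Unset Strict Implicit. Unset Printing Implicit Defensive.
Import Order.TTheory GRing.Theory Num.Theory.
Import numFieldNormedType.Exports.
Local Open Scope classical_set_scope.
Local Open Scope ring_scope.

Section Graphon.
Variable R : realType.

Definition I01 : set R := `[0%R, 1%R].

Definition leb := (@lebesgue_measure R).
Definition leb2 := (leb \x leb)%E.

(* a graphon: measurable W : I^2 -> I, symmetric (values outside I^2 are irrelevant) *)
Definition graphon (W : R * R -> R) : Prop :=
  measurable_fun (I01 `*` I01) W /\
  (forall x y, I01 x -> I01 y -> 0 <= W (x, y) <= 1) /\
  (forall x y, I01 x -> I01 y -> W (x, y) = W (y, x)).

Definition eW (W : R * R -> R) (A B : set R) : \bar R :=
  (\int[leb2]_(z in A `*` B) (W z)%:E)%E.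

Definition volW (W : R * R -> R) (A : set R) : \bar R := eW W A I01.

Definition proper_subset (A : set R) : Prop :=
  measurable A /\ A `<=` I01 /\ (0 < leb A)%E /\ (leb A < 1)%E.

Definition connected_graphon (W : R * R -> R) : Prop :=
  forall A, proper_subset A -> eW W A (I01 `\` A) != 0%E.

Definition cheeger (W : R * R -> R) : \bar R :=
  ereal_inf [set r | exists A, proper_subset A /\
     r = (eW W A (I01 `\` A) / Order.min (volW W A) (volW W (I01 `\` A)))%E].

End Graphon.

From HB Require Import structures.
From mathcomp Require Import all_boot all_order all_algebra.
From mathcomp Require Import all_classical all_reals all_analysis.
From mathcomp Require Import ring lra.
Import Order.TTheory GRing.Theory Num.Theory.
Import numFieldNormedType.Exports.
Local Open Scope classical_set_scope.
Local Open Scope ring_scope.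

(* W is the indicator of a union of squares J_n x J_n, where J_n is the dyadic
   interval [2^-(n+1), 2^-n] widened on both sides by the margin (2^-n)^3/8, so
   that consecutive blocks overlap and the squares cover a neighbourhood of the
   diagonal.  If e_W(A, A^c) = 0 then on every block A or A^c is null, and the
   positive-measure overlaps forbid switching between the two alternatives, so
   A or A^c is null.  For A = [0, c] with c = 2^-(n+1), only points within one
   margin of c are joined across the cut, so e_W(A, A^c) is of order c^3 while
   both volumes are at least (c/4)^2: hence h_W <= 4c for every such c. *)

Lemma open_setX (T U : topologicalType) (A : set T) (B : set U) :
  open A -> open B -> open (A `*` B).
Proof.
move=> oA oB; have -> : A `*` B = (fst @^-1` A) `&` (snd @^-1` B) by [].
apply: openI; apply: (proj1 (continuousP _)) => // z.
- exact: cvg_fst.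
- exact: cvg_snd.
Qed.

Lemma chain_dichotomy (P Q : nat -> Prop) :
  (forall n, P n \/ Q n) -> (forall n, P n -> ~ Q n.+1) ->
  (forall n, Q n -> ~ P n.+1) -> (forall n, P n) \/ (forall n, Q n).
Proof.
move=> PQ PnQ QnP; case: (PQ 0%N) => [P0|Q0]; [left|right].
- by elim=> // n Pn; case: (PQ n.+1) => // /(PnQ n Pn).
- by elim=> // n Qn; case: (PQ n.+1) => // /(QnP n Qn).
Qed.

Lemma cheeger_ge0 (R : realType) (W : R * R -> R) :
  (forall z, 0 <= W z) -> (0 <= cheeger W)%E.
Proof.
move=> W0; apply/ereal_infP => r [A [_ ->]].
have eW0 B C : (0 <= eW W B C)%E by apply: integral_ge0 => z _; rewrite lee_fin.
by apply: mule_ge0 => //; rewrite inve_ge0 le_min !eW0.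
Qed.

Lemma lee_div_fin (R : realType) (x y : \bar R) (a b : R) :
  (0 <= x)%E -> (x <= a%:E)%E -> 0 < b -> (b%:E <= y)%E -> (x / y <= (a / b)%:E)%E.
Proof.
move=> x0 xa b0 by_; have y0 : (0 < y)%E by apply: lt_le_trans by_; rewrite lte_fin.
apply: (@le_trans _ _ (a%:E * b%:E^-1)%E).
  apply: lee_pmul => //; first by rewrite inve_ge0 ltW.
  rewrite lee_pV2 ?inE /= ?lee_fin ?(ltW b0) ?(ltW y0) //.
by rewrite inver gt_eqF // -EFinM.
Qed.

Section BlockGraphon.
Variable R : realType.
Local Notation lebesgue := (@lebesgue_measure R).

Definition halfpow (n : nat) : R := 2^-1 ^+ n.
Definition margin (n : nat) : R := halfpow n ^+ 3 / 8.

Lemma halfpow0 : halfpow 0 = 1. Proof. by rewrite /halfpow expr0. Qed.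
Lemma halfpowS n : halfpow n.+1 = halfpow n / 2. Proof. by rewrite /halfpow exprSr. Qed.
Lemma halfpow_gt0 n : 0 < halfpow n. Proof. by rewrite exprn_gt0 // invr_gt0. Qed.

Lemma halfpow_le1 n : halfpow n <= 1.
Proof. by rewrite exprn_ile1 // ?invr_ge0 // invf_le1 // ler1n. Qed.

Lemma halfpow_le m n : (m <= n)%N -> halfpow n <= halfpow m.
Proof.
move=> /subnK <-; elim: (n - m)%N => [|k IH]; first by rewrite add0n.
by rewrite addSn halfpowS; have := halfpow_gt0 (k + m); lra.
Qed.

Lemma halfpow_le_inv n : halfpow n <= n.+1%:R^-1.
Proof.
rewrite /halfpow exprVn lef_pV2 ?posrE ?exprn_gt0 // -natrX ler_nat.
exact: ltn_expl.
Qed.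

Lemma margin_gt0 n : 0 < margin n.
Proof. by rewrite divr_gt0 // exprn_gt0 // halfpow_gt0. Qed.

Lemma margin_le n : margin n <= halfpow n / 8.
Proof.
rewrite /margin ler_pM2r // !exprS expr0 mulr1.
by have := halfpow_le1 n; have := halfpow_gt0 n; nra.
Qed.

Lemma halfpow_lt eps : 0 < eps -> exists n, halfpow n < eps.
Proof.
move=> eps0; exists (Num.bound eps^-1); apply: le_lt_trans (halfpow_le_inv _) _.
rewrite -[ltRHS]invrK ltf_pV2 ?posrE ?invr_gt0 //.
apply: lt_le_trans (archi_boundP _) _; first by rewrite invr_ge0 ltW.
by rewrite ler_nat.
Qed.

Lemma halfpow_bracket x : 0 < x <= 1 -> exists n, halfpow n.+1 <= x <= halfpow n.
Proof.
move=> /andP[x0 x1]; have [N xN] := halfpow_lt _ x0.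
elim: N xN => [|N IH] xN; first by rewrite halfpow0 in xN; lra.
by have [xN'|/IH] := leP x (halfpow N); first by exists N; rewrite xN' ltW.
Qed.

Definition block n : set R := `](halfpow n.+1 - margin n.+1), (halfpow n + margin n)[.
Definition block_squares : set (R * R) := \bigcup_n (block n `*` block n).
Definition block_graphon (z : R * R) : R := \1_block_squares z.

Lemma block_cover x : 0 < x <= 1 -> exists n, block n x.
Proof.
move=> /halfpow_bracket[n /andP[x1 x2]]; exists n; rewrite /block /= in_itv /=.
by have := margin_gt0 n; have := margin_gt0 n.+1; move=> ? ?; apply/andP; split; lra.
Qed.

Lemma measurable_block_squares : measurable block_squares.
Proof. by apply: bigcupT_measurable => n; apply: measurableX; exact: measurable_itv. Qed.

Lemma block_squaresC x y : block_squares (x, y) -> block_squares (y, x).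
Proof. by move=> [n _ [? ?]]; exists n. Qed.

Definition diagonal_nbhd : set (R * R) :=
  block_squares `&` (`]0%R, 1%R[ `*` `]0%R, 1%R[).

Lemma open_diagonal_nbhd : open diagonal_nbhd.
Proof.
by apply: openI; [apply: bigcup_open => n _|]; apply: open_setX; exact: itv_open.
Qed.

Lemma diagonal_nbhd_diag x : 0 < x < 1 -> diagonal_nbhd (x, x).
Proof.
move=> /andP[x0 x1]; have [n bx] : exists n, block n x by apply: block_cover; rewrite x0 ltW.
split; first by exists n.
by split; rewrite /= in_itv /= x0 x1.
Qed.

Lemma leb_itv {a b : R} : a <= b -> forall ba bb,
  leb [set` Interval (BSide ba a) (BSide bb b)] = (b - a)%:E.
Proof.
move=> + ba bb; rewrite le_eqVlt => /orP[/eqP->|ab]; rewrite /leb lebesgue_measure_itv /= lte_fin.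
  by rewrite ltxx subrr.
by rewrite ab -EFinD.
Qed.

Lemma leb2X (A B : set R) : measurable A -> measurable B ->
  leb2 (A `*` B) = (leb A * leb B)%E.
Proof. by move=> mA mB; rewrite /leb2 product_measure1E. Qed.

Lemma eW_block_graphon (A B : set R) : measurable A -> measurable B ->
  eW block_graphon A B = leb2 (block_squares `&` (A `*` B)).
Proof.
move=> mA mB; apply: integral_indic; first exact: measurableX.
exact: measurable_block_squares.
Qed.

Definition overlap n : set R :=
  `](halfpow n.+1 - margin n.+1), (halfpow n.+1 + margin n.+1)[.

Lemma overlap_sub n : overlap n `<=` block n `&` block n.+1 `&` @I01 R.
Proof.
move=> x; rewrite /overlap /block /I01 /= !in_itv /= => /andP[x1 x2].
have := halfpowS n; have := halfpowS n.+1; have := halfpow_gt0 n.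
have := halfpow_le1 n; have := margin_gt0 n; have := margin_gt0 n.+1.
have := margin_gt0 n.+2; have := margin_le n; have := margin_le n.+1.
by have := margin_le n.+2 => *; split; [split|]; apply/andP; split; lra.
Qed.

Lemma overlap_not_negligible n : ~ lebesgue.-negligible (overlap n).
Proof.
have ovp : 0 < margin n.+1 by exact: margin_gt0.
move=> ov0; have : leb (overlap n) = 0%E by apply/negligibleP => //; exact: measurable_itv.
by rewrite leb_itv; [move=> [] /eqP; rewrite subr_eq0 gt_eqF //; lra|lra].
Qed.

Lemma zero_cut_blockwise (A B : set R) : measurable A -> measurable B ->
  leb2 (block_squares `&` (A `*` B)) = 0%E ->
  forall n, lebesgue.-negligible (A `&` block n) \/ lebesgue.-negligible (B `&` block n).
Proof.
move=> mA mB cut0 n.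
have mJ : measurable (block n) by exact: measurable_itv.
have mAJ : measurable (A `&` block n) by exact: measurableI.
have mBJ : measurable (B `&` block n) by exact: measurableI.
have : (leb (A `&` block n) * leb (B `&` block n) = 0)%E.
  rewrite -leb2X //; apply/eqP; rewrite -measure_le0 -cut0.
  apply: le_measure; rewrite ?inE; first exact: measurableX.
    by apply: measurableI; [exact: measurable_block_squares|exact: measurableX].
  by move=> [x y] [[Ax Jx] [By Jy]]; split; [exists n|].
by move/eqP; rewrite mule_eq0 => /orP[] /eqP null; [left|right]; exact/negligibleP.
Qed.

Lemma negligible_blockwise (B : set R) : B `<=` @I01 R ->
  (forall n, lebesgue.-negligible (B `&` block n)) -> lebesgue.-negligible B.
Proof.
move=> BI nB; apply: (@negligibleS _ _ _ lebesgue ([set 0] `|` \bigcup_n (B `&` block n))).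
  move=> x Bx; have [->|x0] := eqVneq x 0; first by left.
  have /andP[x_ge0 x_le1] : 0 <= x <= 1 by have := BI x Bx; rewrite /I01 /= in_itv.
  have [n Jx] : exists n, block n x.
    by apply: block_cover; rewrite x_le1 andbT lt_def x0.
  by right; exists n.
apply: negligibleU; last exact: negligible_bigcup.
by apply/negligibleP => //; exact: lebesgue_measure_set1.
Qed.

Lemma block_graphon_connected : connected_graphon block_graphon.
Proof.
move=> A [mA [AI [A0 A1]]]; apply/eqP.
have mI : measurable (@I01 R) by exact: measurable_itv.
set B := @I01 R `\` A; have mB : measurable B by exact: measurableD.
rewrite eW_block_graphon // => /(zero_cut_blockwise _ _ mA mB) cut0.
have ABI : A `|` B = @I01 R by exact: setDUK.
have covered (C D : set R) : A `|` B `<=` C `|` D -> forall n,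
    lebesgue.-negligible (C `&` block n) -> ~ lebesgue.-negligible (D `&` block n.+1).
  move=> ABCD n nC nD; apply: (overlap_not_negligible n).
  apply: negligibleS (negligibleU nC nD) => x /overlap_sub[[Jx Jx'] Ix].
  by rewrite -ABI in Ix; case: (ABCD x Ix) => [Cx|Dx]; [left|right].
have AB := covered A B (@subset_refl _ _).
have BA := covered B A (ltac:(by rewrite setUC)).
have [nA|nB] := chain_dichotomy _ _ cut0 AB BA.
- have : leb A = 0%E by apply/negligibleP => //; exact: negligible_blockwise.
  by move=> A_0; rewrite A_0 ltxx in A0.
- have B_0 : leb B = 0%E.
    by apply/negligibleP => //; apply: negligible_blockwise => // x [].
  have : leb (A `|` B) = leb A := measureU0 (mu := lebesgue) mA mB B_0.
  rewrite ABI leb_itv ?ler01 // subr0 => A_1.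
  by rewrite -A_1 ltxx in A1.
Qed.

Lemma block_straddle p k x y : block k x -> block k y -> x <= halfpow p.+1 < y ->
  halfpow p.+1 - margin p.+1 < x \/ y < halfpow p.+1 + margin p.+1.
Proof.
rewrite /block /= !in_itv /= => /andP[xl xr] /andP[yl yr] /andP[xc cy].
have := halfpowS p; have := halfpowS p.+1; have := halfpow_gt0 p.+2.
have := margin_le k; have := margin_le k.+1 => *.
have [kp|pk|kp] := ltngtP k p; last by subst; left.
  by have := halfpow_le (k.+1) p kp; lra.
move: pk; rewrite leq_eqVlt => /orP[/eqP pk|kp]; first by subst; right.
by have := halfpow_le p.+2 k kp; lra.
Qed.

Lemma square_le_leb2 (K : set R) (D : set (R * R)) : measurable K -> measurable D ->
  K `*` K `<=` D -> (leb K * leb K <= leb2 D)%E.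
Proof.
by move=> mK mD KD; rewrite -leb2X //; apply: le_measure; rewrite ?inE //; exact: measurableX.
Qed.

Definition core n : set R := `](halfpow n.+1), (halfpow n)[.

Lemma core_sub n : core n `<=` block n `&` @I01 R.
Proof.
move=> x; rewrite /core /block /I01 /= !in_itv /= => /andP[x1 x2].
have := halfpow_le1 n; have := halfpow_gt0 n.+1.
by have := margin_gt0 n; have := margin_gt0 n.+1 => *; split; apply/andP; split; lra.
Qed.

Lemma volW_ge_core n (A : set R) : measurable A -> core n `<=` A ->
  ((halfpow n.+1 ^+ 2)%:E <= volW block_graphon A)%E.
Proof.
move=> mA KA; have mI : measurable (@I01 R) by exact: measurable_itv.
have mK : measurable (core n) by exact: measurable_itv.
have leb_core : leb (core n) = (halfpow n.+1)%:E.
  rewrite leb_itv; first by rewrite halfpowS; congr (_%:E); field.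
  by rewrite halfpowS; have := halfpow_gt0 n; lra.
rewrite /volW eW_block_graphon // expr2 EFinM -leb_core.
apply: square_le_leb2 => //.
  by apply: measurableI; [exact: measurable_block_squares|exact: measurableX].
move=> [x y] /= [Kx /core_sub[Jy Iy]]; have [Jx _] := @core_sub n x Kx.
by split; [exists n|split; [exact: KA|]].
Qed.

Section InitialSegment.
Variable p : nat.
Local Notation c := (halfpow p.+1).
Local Notation e := (margin p.+1).
Local Notation A := `[0, c]%classic.

Lemma initial_segment_proper : proper_subset A.
Proof.
have c0 : 0 < c by exact: halfpow_gt0.
have c1 : c < 1 by rewrite halfpowS; have := halfpow_le1 p; lra.
split; first exact: measurable_itv.
split; first by move=> x; rewrite /I01 /= !in_itv /= => /andP[? ?]; apply/andP; split; lra.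
by rewrite leb_itv ?subr0 ?lte_fin ?c0 ?c1 // ltW.
Qed.

Lemma initial_segment_cut_le :
  (eW block_graphon A (@I01 R `\` A) <= (e + e)%:E)%E.
Proof.
have mI : measurable (@I01 R) by exact: measurable_itv.
have mA : measurable A by exact: measurable_itv.
have e0 : 0 < e by exact: margin_gt0.
have ec : e <= c / 8 by exact: margin_le.
have c1 : c <= 1 by exact: halfpow_le1.
set strip1 := @I01 R `*` `]c, c + e[; set strip2 := `]c - e, c] `*` @I01 R.
have m1 : measurable strip1 by apply: measurableX => //; exact: measurable_itv.
have m2 : measurable strip2 by apply: measurableX => //; exact: measurable_itv.
have cut_sub : block_squares `&` (A `*` (@I01 R `\` A)) `<=` strip1 `|` strip2.
  move=> [x y] [[k _ [Jx Jy]] [/= Ax [Iy /= nAy]]].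
  move: Ax Iy nAy; rewrite /I01 /= !in_itv /= => /andP[x0 xc] /andP[y0 y1].
  move=> /negP; rewrite negb_and -!ltNge => /orP[|cy]; first lra.
  have [xl|yr] := @block_straddle p k x y Jx Jy (ltac:(by rewrite xc cy)).
    by right; split; rewrite /I01 /= in_itv /=; apply/andP; split; lra.
  by left; split; rewrite /I01 /= in_itv /=; apply/andP; split; lra.
have strip1E : leb2 strip1 = e%:E.
  have ce : c <= c + e by lra.
  rewrite leb2X // /I01 (leb_itv (@ler01 R)) (leb_itv ce) -EFinM.
  by congr (_%:E); ring.
have strip2E : leb2 strip2 = e%:E.
  have ec' : c - e <= c by lra.
  rewrite leb2X // /I01 (leb_itv (@ler01 R)) (leb_itv ec') -EFinM.
  by congr (_%:E); ring.
rewrite eW_block_graphon //; last exact: measurableD.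
apply: (@le_trans _ _ (leb2 (strip1 `|` strip2))).
  apply: le_measure => //; rewrite inE; last exact: measurableU.
  apply: measurableI; first exact: measurable_block_squares.
  by apply: measurableX => //; exact: measurableD.
apply: le_trans (measureU2 (leb2 (R:=R)) m1 m2) _.
by have -> : (e + e)%:E = (leb2 strip1 + leb2 strip2)%E by rewrite strip1E strip2E.
Qed.

Lemma initial_segment_ratio_le :
  (eW block_graphon A (@I01 R `\` A) /
     Order.min (volW block_graphon A) (volW block_graphon (@I01 R `\` A))
   <= (4 * c)%:E)%E.
Proof.
have mI : measurable (@I01 R) by exact: measurable_itv.
have mA : measurable A by exact: measurable_itv.
have c0 : 0 < c by exact: halfpow_gt0.
have c_half : halfpow p.+3 = c / 4.
  by rewrite !halfpowS; field.
have cut0 : (0 <= eW block_graphon A (@I01 R `\` A))%E.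
  by apply: integral_ge0 => z _; rewrite lee_fin /block_graphon indicE.
have -> : 4 * c = (e + e) / halfpow p.+3 ^+ 2.
  by rewrite c_half /margin; field; rewrite gt_eqF.
apply: lee_div_fin cut0 initial_segment_cut_le _ _; first by rewrite exprn_gt0 ?halfpow_gt0.
rewrite le_min; apply/andP; split.
  apply: volW_ge_core => // x; rewrite /core /= !in_itv /= => /andP[? ?].
  have := halfpow_gt0 p.+3; have := halfpow_le p.+1 p.+2 (leqnSn _) => *.
  by apply/andP; split; lra.
have core0_sub : core 0 `<=` @I01 R `\` A.
  move=> x /[dup] /core_sub[_ Ix]; rewrite /core /= !in_itv /= halfpow0 => /andP[x1 _].
  split => // /andP[_ xc]; have := halfpow_le 1 p.+1 isT; lra.
apply: (le_trans _ (volW_ge_core 0 _ (measurableD mI mA) core0_sub)).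
have h0 n : 0 <= halfpow n := ltW (halfpow_gt0 n).
by rewrite lee_fin ler_pXn2r ?nnegrE ?h0 //; exact: halfpow_le.
Qed.

Lemma cheeger_le_halfpow : (cheeger block_graphon <= (4 * c)%:E)%E.
Proof.
apply: le_trans (ereal_inf_lbound _) initial_segment_ratio_le.
by exists A; split => //; exact: initial_segment_proper.
Qed.

End InitialSegment.

Lemma block_graphon01 z : block_graphon z = 0 \/ block_graphon z = 1.
Proof. by rewrite /block_graphon indicE; case: (_ \in _); [right|left]. Qed.

Lemma block_graphon_graphon : graphon block_graphon.
Proof.
split; first by apply: measurable_realfun.measurable_indic; exact: measurable_block_squares.
split; first by move=> x y _ _; case: (block_graphon01 (x, y)) => ->; rewrite ?lexx ?ler01.
move=> x y _ _; rewrite /block_graphon !indicE.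
suff -> : ((x, y) \in block_squares) = ((y, x) \in block_squares) by [].
by apply/idP/idP; rewrite !in_setE; exact: block_squaresC.
Qed.

Lemma cheeger_block_graphon : cheeger block_graphon = 0%E.
Proof.
apply/eqP; rewrite eq_le cheeger_ge0 ?andbT; last by move=> z; rewrite /block_graphon indicE.
apply/lee_addgt0Pr => eps eps0; rewrite add0e.
have [n hn] := halfpow_lt (eps / 4) (ltac:(by rewrite divr_gt0)).
apply: le_trans (cheeger_le_halfpow n) _; rewrite lee_fin.
by have := halfpow_le n n.+1 (leqnSn n); lra.
Qed.

End BlockGraphon.

Theorem mainTheorem18 (R : realType) :
  exists W : R * R -> R,
    graphon W /\ connected_graphon W /\ cheeger W = 0%E /\
    (forall x y, I01 x -> I01 y -> W (x, y) = 0 \/ W (x, y) = 1) /\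
    (exists U : set (R * R),
        open U /\ U `<=` (`]0%R, 1%R[ `*` `]0%R, 1%R[) /\
        (forall x : R, 0 < x < 1 -> U (x, x)) /\
        (forall z, U z -> W z = 1)).
Proof.
exists (@block_graphon R); split; first exact: block_graphon_graphon.
split; first exact: block_graphon_connected.
split; first exact: cheeger_block_graphon.
split; first by move=> x y _ _; exact: block_graphon01.
exists (diagonal_nbhd R); split; first exact: open_diagonal_nbhd.
split; first by move=> z [].
split; first exact: diagonal_nbhd_diag.
by move=> z [Sz _]; rewrite /block_graphon indicE mem_set.
Qed.
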